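(* Let $k\in[n]$, let $\Gamma^{-1/2}\Sigma\Gamma^{-1/2}=V\Lambda V^T$ with $V$ orthogonal and $\Lambda=\mathrm{diag}(\lambda_1,\dots,\lambda_n)$, and let $A$ be the symmetric matrix with $A_{ii}=\frac{V_{ki}^2}{4\lambda_i}+\sum_{\ell=1}^n\frac{V_{k\ell}^2}{2(\lambda_i+\lambda_\ell)}$ and $A_{ij}=\frac{V_{ki}V_{kj}}{2(\lambda_i+\lambda_j)}$ for $i\neq j$. Then all eigenvalues of $\Lambda^{1/2}A\Lambda^{1/2}$ are real and lie in the open interval $(0,1)$.
   Context: $\Sigma\in\mathbb{R}^{n\times n}$ is symmetric positive definite and $\Gamma=\mathrm{diag}(\gamma_1,\dots,\gamma_n)$ with all $\gamma_i>0$; hence $\Gamma^{-1/2}\Sigma\Gamma^{-1/2}$ is symmetric positive definite and all $\lambda_i>0$. *)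

From HB Require Import structures.
From mathcomp Require Import all_boot all_order all_algebra.
From mathcomp Require Import complex.
Set Implicit Arguments. Unset Strict Implicit. Unset Printing Implicit Defensive.
Import Order.TTheory GRing.Theory Num.Theory.
Local Open Scope ring_scope.

Definition spd (R : rcfType) (n : nat) (S : 'M[R]_n) : Prop :=
  S^T = S /\ forall x : 'cV[R]_n, x != 0 -> 0 < (x^T *m S *m x) 0 0.

Definition orthogonal_mx (R : rcfType) (n : nat) (V : 'M[R]_n) : Prop :=
  V *m V^T = 1%:M.

Definition diag_sqrt (R : rcfType) (n : nat) (d : 'rV[R]_n) : 'M[R]_n :=
  diag_mx (\row_i Num.sqrt (d 0 i)).
Definition diag_invsqrt (R : rcfType) (n : nat) (d : 'rV[R]_n) : 'M[R]_n :=
  diag_mx (\row_i (Num.sqrt (d 0 i))^-1).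

Definition Amat (R : rcfType) (n : nat) (V : 'M[R]_n) (lam : 'rV[R]_n)
  (k : 'I_n) : 'M[R]_n :=
  \matrix_(i, j)
    if i == j then
      V k i ^+ 2 / (4 * lam 0 i)
      + \sum_(l < n) V k l ^+ 2 / (2 * (lam 0 i + lam 0 l))
    else V k i * V k j / (2 * (lam 0 i + lam 0 j)).

Definition cmx (R : rcfType) (m n : nat) (M : 'M[R]_(m, n)) : 'M[R[i]]_(m, n) :=
  map_mx (fun x => (x%:C)%C) M.

(* The matrix [M = Lambda^(1/2) A Lambda^(1/2)] is real symmetric, so each of its
   complex eigenvalues is real and equals a Rayleigh quotient
   [(p M p^T + q M q^T) / (|p|^2 + |q|^2)] built from the real and imaginary parts
   of an eigenvector; it therefore suffices that [0 < y M y^T < |y|^2] for every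
   real [y <> 0].  Writing [s_i = sqrt lambda_i], [v = V_k] and [u_i = y_i s_i v_i],
   the diagonal correction in [A] gives
     [y M y^T = 1/2 sum_ij u_i u_j / (lambda_i + lambda_j)
                + sum_ij lambda_i y_i^2 v_j^2 / (2 (lambda_i + lambda_j))].
   The first sum is a Cauchy form, nonnegative because pivoting on one coordinate
   splits off a square and leaves a Cauchy form with smaller support; the second
   is positive since [|v| = 1].  Using [|v| = 1] again,
     [|y|^2 - 2 y M y^T = 1/2 sum_ij (s_j y_i v_j - s_i y_j v_i)^2 / (lambda_i + lambda_j)],
   which is nonnegative.  The [lambda_i] are positive because they are the values
   of the positive definite form [Sigma] at the columns of the invertible matrix
   [Gamma^(-1/2) V]. *)

From HB Require Import structures.
From mathcomp Require Import all_boot all_order all_algebra.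
From mathcomp Require Import complex ring lra.
Set Implicit Arguments. Unset Strict Implicit.
Import Order.TTheory GRing.Theory Num.Theory.
Local Open Scope ring_scope.

Lemma sumr_gt0_witness (R : numDomainType) (I : finType) (F : I -> R) i0 :
  (forall i, 0 <= F i) -> 0 < F i0 -> 0 < \sum_i F i.
Proof.
move=> F_ge0 Fi0; rewrite lt0r sumr_ge0 // andbT psumr_neq0 //.
by apply/hasP; exists i0; rewrite ?mem_index_enum.
Qed.

(* Symmetrising in [(i, j)] turns the sum into [1/2 sum (w i j - w j i)^2 c i j]. *)
Lemma sum_sqr_sub_mul_sym_ge0 (R : realFieldType) (n : nat) (w c : 'I_n -> 'I_n -> R) :
  (forall i j, c i j = c j i) -> (forall i j, 0 <= c i j) ->
  0 <= \sum_i \sum_j (w i j ^+ 2 - w i j * w j i) * c i j.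
Proof.
move=> c_sym c_ge0.
set S := \sum_i \sum_j _.
have S_swap : S = \sum_i \sum_j (w j i ^+ 2 - w j i * w i j) * c i j.
  by rewrite /S exchange_big; apply: eq_bigr => i _; apply: eq_bigr => j _; rewrite c_sym.
have S2 : S + S = \sum_i \sum_j (w i j - w j i) ^+ 2 * c i j.
  rewrite {2}S_swap /S -big_split /=; apply: eq_bigr => i _.
  by rewrite -big_split /=; apply: eq_bigr => j _; ring.
suff : 0 <= S + S by lra.
by rewrite S2 sumr_ge0 // => i _; rewrite sumr_ge0 // => j _; rewrite mulr_ge0 ?sqr_ge0.
Qed.

Section CauchyForm.
Variables (R : realFieldType) (n : nat) (a : 'I_n -> R).
Hypothesis a_gt0 : forall i, 0 < a i.

Definition cauchy_form (u : 'I_n -> R) : R :=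
  \sum_i \sum_j u i * u j / (a i + a j).

Lemma cauchy_form_pivot (u : 'I_n -> R) i0 :
  cauchy_form u = 2 * a i0 * (\sum_i u i / (a i0 + a i)) ^+ 2
                  + cauchy_form (fun i => u i * (a i - a i0) / (a i + a i0)).
Proof.
have a_neq0 i j : a i + a j != 0 by rewrite lt0r_neq0 // addr_gt0.
rewrite expr2 mulr_suml mulr_sumr /cauchy_form -big_split /=.
apply: eq_bigr => i _; rewrite mulr_sumr mulr_sumr -big_split /=.
apply: eq_bigr => j _.
have := a_neq0 i j; have := a_neq0 i0 i; have := a_neq0 i0 j.
have := a_neq0 i i0; have := a_neq0 j i0.
by move=> h1 h2 h3 h4 h5; field; rewrite ?h1 ?h2 ?h3 ?h4 ?h5.
Qed.

Lemma cauchy_form_ge0 (u : 'I_n -> R) : 0 <= cauchy_form u.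
Proof.
move: {2}#|[pred i | u i != 0]| (leqnn #|[pred i | u i != 0]|) => m.
elim: m u => [|m IHm] u supp_u.
  have u0 i : u i = 0.
    by apply/eqP; apply: contraTT supp_u => ui; rewrite -ltnNge; apply/card_gt0P; exists i.
  by rewrite /cauchy_form big1 // => i _; rewrite big1 // => j _; rewrite u0 !mul0r.
have [i0 ui0|u0] := pickP [pred i | u i != 0]; last first.
  by apply: IHm; rewrite (eq_card0 u0).
rewrite (cauchy_form_pivot u i0); apply: addr_ge0.
  by rewrite mulr_ge0 ?sqr_ge0 // mulr_ge0 // ltW.
apply: IHm; rewrite -ltnS; apply: leq_trans supp_u; apply: proper_card.
apply/properP; split; last by exists i0; rewrite !inE /= ?subrr ?mulr0 ?mul0r ?eqxx.
by apply/subsetP => i; rewrite !inE /=; apply: contraNneq => ->; rewrite !mul0r.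
Qed.

End CauchyForm.

Section RealQuadraticForms.
Variables (R : realDomainType) (n : nat).
Implicit Types (M : 'M[R]_n) (u w x y : 'rV[R]_n).

Definition qform M y : R := (y *m M *m y^T) 0 0.
Definition sqnorm y : R := (y *m y^T) 0 0.

Lemma qformE M y : qform M y = \sum_i \sum_j y 0 i * M i j * y 0 j.
Proof.
rewrite /qform mxE exchange_big; apply: eq_bigr => j _.
by rewrite mxE mulr_suml; apply: eq_bigr => i _; rewrite !mxE.
Qed.

Lemma sqnormE y : sqnorm y = \sum_i y 0 i ^+ 2.
Proof. by rewrite /sqnorm mxE; apply: eq_bigr => i _; rewrite mxE expr2. Qed.

Lemma sqnorm_ge0 y : 0 <= sqnorm y.
Proof. by rewrite sqnormE sumr_ge0 // => i _; rewrite sqr_ge0. Qed.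

Lemma sqnorm_gt0 y : y != 0 -> 0 < sqnorm y.
Proof.
case/rV0Pn => j yj; rewrite sqnormE (sumr_gt0_witness (i0 := j)) // => [i|].
  exact: sqr_ge0.
by rewrite exprn_even_gt0 //= yj.
Qed.

Lemma mulmx_trmx_sym M x y : M^T = M -> (x *m M *m y^T) 0 0 = (y *m M *m x^T) 0 0.
Proof.
move=> M_sym; transitivity ((x *m M *m y^T)^T 0 0); first by rewrite [RHS]mxE.
by rewrite !trmx_mul trmxK M_sym mulmxA.
Qed.

Lemma scale2_mulmx_tr (a b : R) u w y :
  ((a *: u + b *: w) *m y^T) 0 0 = a * (u *m y^T) 0 0 + b * (w *m y^T) 0 0.
Proof.
rewrite !mxE !mulr_sumr -big_split /=; apply: eq_bigr => j _; rewrite !mxE; ring.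
Qed.

End RealQuadraticForms.

Section SymmetricEigenvalues.
Variables (R : rcfType) (n : nat) (M : 'M[R]_n).
Hypothesis M_sym : M^T = M.

Lemma map_Re_mulmx_cmx m (x : 'M[R[i]]_(m, n)) :
  map_mx (@complex.Re R) (x *m cmx M) = map_mx (@complex.Re R) x *m M.
Proof.
apply/matrixP => i j; rewrite !mxE (raddf_sum (@complex.Re R : Rcomplex R -> R)).
by apply: eq_bigr => l _; rewrite !mxE; case: (x i l) => u w; rewrite /= mulr0 subr0.
Qed.

Lemma map_Im_mulmx_cmx m (x : 'M[R[i]]_(m, n)) :
  map_mx (@complex.Im R) (x *m cmx M) = map_mx (@complex.Im R) x *m M.
Proof.
apply/matrixP => i j; rewrite !mxE (raddf_sum (@complex.Im R : Rcomplex R -> R)).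
by apply: eq_bigr => l _; rewrite !mxE; case: (x i l) => u w; rewrite /= mulr0 add0r.
Qed.

Lemma eigenvalue_cmx_sym_Rayleigh z (x : 'rV[R[i]]_n) :
  x *m cmx M = z *: x ->
  let p := map_mx (@complex.Re R) x in let q := map_mx (@complex.Im R) x in
  complex.Im z * (sqnorm p + sqnorm q) = 0
  /\ complex.Re z * (sqnorm p + sqnorm q) = qform M p + qform M q.
Proof.
move=> eig p q.
have pM : p *m M = complex.Re z *: p + (- complex.Im z) *: q.
  rewrite -map_Re_mulmx_cmx eig; apply/rowP => j; rewrite !mxE.
  by case: z {eig} => a b; case: (x 0 j) => u w /=; rewrite mulNr.
have qM : q *m M = complex.Re z *: q + complex.Im z *: p.
  rewrite -map_Im_mulmx_cmx eig; apply/rowP => j; rewrite !mxE.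
  by case: z {eig pM} => a b; case: (x 0 j) => u w /=; rewrite addrC.
have pq_sym : (p *m q^T) 0 0 = (q *m p^T) 0 0.
  transitivity ((p *m q^T)^T 0 0); first by rewrite [RHS]mxE.
  by rewrite trmx_mul trmxK.
have := mulmx_trmx_sym p q M_sym.
rewrite /qform /sqnorm pM qM !scale2_mulmx_tr pq_sym => ?.
by split; lra.
Qed.

Lemma eigenvalue_cmx_sym_real_01 z :
  (forall y, y != 0 -> 0 < qform M y < sqnorm y) ->
  eigenvalue (cmx M) z -> exists r : R, z = r%:C%C /\ 0 < r < 1.
Proof.
move=> bounds /eigenvalueP [x eig x_neq0].
have [] := eigenvalue_cmx_sym_Rayleigh eig.
set p := map_mx _ x; set q := map_mx _ x => Imz Rez.
have weak y : 0 <= qform M y <= sqnorm y.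
  have [-> | /bounds /andP [lo hi]] := eqVneq y 0; last by rewrite !ltW.
  by rewrite /qform /sqnorm !mul0mx mxE lexx.
have pq_neq0 : (p != 0) || (q != 0).
  apply: contraNT x_neq0; rewrite negb_or !negbK => /andP [/eqP p0 /eqP q0].
  apply/eqP/rowP => j.
  have := congr1 (fun y : 'rV[R]_n => y 0 j) p0; have := congr1 (fun y : 'rV[R]_n => y 0 j) q0.
  by rewrite /= !mxE => Im0 Re0; rewrite [x 0 j]complexE Re0 Im0 mulr0 addr0.
have N_gt0 : 0 < sqnorm p + sqnorm q.
  by case/orP: pq_neq0 => /sqnorm_gt0; have := sqnorm_ge0 p; have := sqnorm_ge0 q; lra.
have Q_bounds : 0 < qform M p + qform M q < sqnorm p + sqnorm q.
  have := weak p; have := weak q.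
  by case/orP: pq_neq0 => /bounds; lra.
exists (complex.Re z); split.
  by rewrite [LHS]complexE (mulIf (lt0r_neq0 N_gt0) (etrans Imz (esym (mul0r _)))) mulr0 addr0.
have [Q_gt0 Q_lt] := andP Q_bounds.
by rewrite -(pmulr_lgt0 _ N_gt0) Rez Q_gt0 -(ltr_pM2r N_gt0) mul1r Rez.
Qed.

End SymmetricEigenvalues.

Lemma spd_congr_diag_gt0 (R : rcfType) (n : nat) (S W : 'M[R]_n) (lam : 'rV[R]_n) i :
  spd S -> W^T *m S *m W = diag_mx lam -> col i W != 0 -> 0 < lam 0 i.
Proof.
move=> [_ S_pos] SW /S_pos; congr (0 < _).
by rewrite tr_col -row_mul !colE mulmxA -colE -row_mul SW !mxE eqxx mulr1n.
Qed.

Lemma unitmx_col_neq0 (R : comUnitRingType) (n : nat) (W : 'M[R]_n) i :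
  W \in unitmx -> col i W != 0.
Proof.
move=> W_unit; apply: contraTneq isT => Wi0.
have := congr1 (mulmx (invmx W)) Wi0.
rewrite colE mulKmx // mulmx0 => /matrixP /(_ i 0).
by rewrite !mxE !eqxx /= => /eqP; rewrite oner_eq0.
Qed.

Lemma orthogonal_row_sqr_sum (R : rcfType) (n : nat) (V : 'M[R]_n) k :
  orthogonal_mx V -> \sum_l V k l ^+ 2 = 1.
Proof.
move=> /(congr1 (fun M : 'M[R]_n => M k k)); rewrite !mxE eqxx mulr1n => <-.
by apply: eq_bigr => l _; rewrite mxE expr2.
Qed.

Section ScaledAmat.
Variables (R : rcfType) (n : nat) (V : 'M[R]_n) (lam : 'rV[R]_n) (k : 'I_n).
Variable s : 'I_n -> R.
Hypotheses (s_gt0 : forall i, 0 < s i) (sqr_s : forall i, s i ^+ 2 = lam 0 i).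

Let M := diag_mx (\row_i s i) *m Amat V lam k *m diag_mx (\row_i s i).

Let lam_gt0 i : 0 < lam 0 i.
Proof. by rewrite -sqr_s exprn_gt0. Qed.

Let lamD_neq0 i j : lam 0 i + lam 0 j != 0.
Proof. by rewrite lt0r_neq0 // addr_gt0 ?lam_gt0. Qed.

Let lamD_gt0 i j : 0 < 2 * (lam 0 i + lam 0 j).
Proof. by rewrite mulr_gt0 // addr_gt0 ?lam_gt0. Qed.

Let diag_term_ge0 a b i j : 0 <= lam 0 i * a ^+ 2 * b ^+ 2 / (2 * (lam 0 i + lam 0 j)).
Proof.
apply: divr_ge0; last exact: ltW (lamD_gt0 i j).
by apply: mulr_ge0; [apply: mulr_ge0; [exact: ltW (lam_gt0 i) | exact: sqr_ge0] | exact: sqr_ge0].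
Qed.

Lemma scaled_Amat_sym : M^T = M.
Proof.
rewrite /M !trmx_mul !tr_diag_mx mulmxA; congr (_ *m _ *m _).
apply/matrixP => i j; rewrite !mxE eq_sym.
by case: eqP => [-> // | _]; rewrite [V k j * _]mulrC [lam 0 j + _]addrC.
Qed.

Lemma qform_scaled_Amat y :
  qform M y = cauchy_form (lam 0) (fun i => y 0 i * s i * V k i) / 2
    + \sum_i \sum_j lam 0 i * y 0 i ^+ 2 * V k j ^+ 2 / (2 * (lam 0 i + lam 0 j)).
Proof.
rewrite qformE /cauchy_form mulr_suml -big_split /=; apply: eq_bigr => i _.
rewrite mulr_suml (bigD1 i) //= [X in _ = X + _](bigD1 i) //=.
have off_diag : \sum_(j | j != i) y 0 i * M i j * y 0 j
    = \sum_(j | j != i) y 0 i * s i * V k i * (y 0 j * s j * V k j) / (lam 0 i + lam 0 j) / 2.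
  apply: eq_bigr => j ji; rewrite /M mul_mx_diag mul_diag_mx !mxE eq_sym (negbTE ji).
  by field; rewrite lamD_neq0.
have on_diag : y 0 i * M i i * y 0 i
    = y 0 i * s i * V k i * (y 0 i * s i * V k i) / (lam 0 i + lam 0 i) / 2
      + \sum_j lam 0 i * y 0 i ^+ 2 * V k j ^+ 2 / (2 * (lam 0 i + lam 0 j)).
  under [X in _ = _ + X]eq_bigr do rewrite -mulrA.
  rewrite -mulr_sumr /M mul_mx_diag mul_diag_mx !mxE eqxx.
  have := lamD_neq0 i i; rewrite -sqr_s => hD.
  by field; rewrite hD (lt0r_neq0 (s_gt0 i)).
by rewrite off_diag on_diag; ring.
Qed.

Hypothesis row_unit : \sum_l V k l ^+ 2 = 1.

Lemma qform_scaled_Amat_gt0 y : y != 0 -> 0 < qform M y.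
Proof.
move=> /sqnorm_gt0; rewrite sqnormE => /lt0r_neq0 /eqP /psumr_neq0P.
case=> [i _|j /= yj]; first exact: sqr_ge0.
have /psumr_neq0P [i _|l /= Vkl] : \sum_l V k l ^+ 2 <> 0.
    by rewrite row_unit; apply/eqP; exact: oner_neq0.
  exact: sqr_ge0.
rewrite qform_scaled_Amat ltr_wpDl ?divr_ge0 ?cauchy_form_ge0 //.
apply: (sumr_gt0_witness (i0 := j)) => [i|].
  by apply: sumr_ge0 => l' _; exact: diag_term_ge0.
apply: (sumr_gt0_witness (i0 := l)) => [l'|].
  exact: diag_term_ge0.
by rewrite divr_gt0 // mulr_gt0 // mulr_gt0 // lam_gt0.
Qed.

Lemma qform_scaled_Amat_le y : 2 * qform M y <= sqnorm y.
Proof.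
pose w i j := s j * y 0 i * V k j.
have gap : sqnorm y - 2 * qform M y
    = \sum_i \sum_j (w i j ^+ 2 - w i j * w j i) * (lam 0 i + lam 0 j)^-1.
  have two_halves (X Y : R) : 2 * (X / 2 + Y) = X + 2 * Y by lra.
  have sqnorm_split : sqnorm y = \sum_i \sum_j y 0 i ^+ 2 * V k j ^+ 2.
    by rewrite sqnormE; apply: eq_bigr => i _; rewrite -mulr_sumr row_unit mulr1.
  rewrite sqnorm_split qform_scaled_Amat two_halves /cauchy_form mulr_sumr -big_split -sumrB /=.
  apply: eq_bigr => i _; rewrite mulr_sumr -big_split -sumrB /=; apply: eq_bigr => j _.
  have := lamD_neq0 i j; rewrite /w -!sqr_s => hD.
  by field.
rewrite -subr_ge0 gap sum_sqr_sub_mul_sym_ge0 // => i j; first by rewrite addrC.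
by rewrite invr_ge0 ltW // addr_gt0 ?lam_gt0.
Qed.

End ScaledAmat.

Theorem mainTheorem3 (R : rcfType) (n : nat)
  (Sigma : 'M[R]_n) (gamma : 'rV[R]_n) (V : 'M[R]_n) (lam : 'rV[R]_n)
  (k : 'I_n) :
  spd Sigma ->
  (forall i, 0 < gamma 0 i) ->
  orthogonal_mx V ->
  diag_invsqrt gamma *m Sigma *m diag_invsqrt gamma = V *m diag_mx lam *m V^T ->
  forall z : R[i],
    eigenvalue (cmx (diag_sqrt lam *m Amat V lam k *m diag_sqrt lam)) z ->
    exists r : R, z = (r%:C)%C /\ 0 < r < 1.
Proof.
move=> Sigma_spd gamma_gt0 V_orth Sigma_diag z.
set W := diag_invsqrt gamma *m V.
have [V_unit _] := mulmx1_unit V_orth.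
have W_congr : W^T *m Sigma *m W = diag_mx lam.
  have -> : W^T *m Sigma *m W
      = V^T *m (diag_invsqrt gamma *m Sigma *m diag_invsqrt gamma) *m V.
    by rewrite trmx_mul tr_diag_mx !mulmxA.
  have VtV := mulmx1C V_orth.
  by rewrite Sigma_diag !mulmxA VtV mul1mx -mulmxA VtV mulmx1.
have W_unit : W \in unitmx.
  rewrite unitmx_mul V_unit andbT unitmxE det_diag unitfE.
  by apply/prodf_neq0 => i _; rewrite mxE invr_eq0 lt0r_neq0 // sqrtr_gt0.
have lam_gt0 i : 0 < lam 0 i.
  exact: spd_congr_diag_gt0 Sigma_spd W_congr (unitmx_col_neq0 i W_unit).
pose s i := Num.sqrt (lam 0 i).
have s_gt0 i : 0 < s i by rewrite sqrtr_gt0.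
have sqr_s i : s i ^+ 2 = lam 0 i by rewrite sqr_sqrtr // ltW.
have row_unit := orthogonal_row_sqr_sum k V_orth.
apply: eigenvalue_cmx_sym_real_01 => [|y y_neq0]; first exact: scaled_Amat_sym.
have := qform_scaled_Amat_gt0 s_gt0 sqr_s row_unit y_neq0.
have := qform_scaled_Amat_le s_gt0 sqr_s row_unit y.
by lra.
Qed.
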